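(* Let $k,\ell\ge 2$ be integers, $\alpha>0$, and let $\mathcal{C}$ be a non-empty $\alpha$-rich collection of $2\ell$-cycles in a graph $G$. If $\alpha\ge k\ell$, then $G$ contains a copy of $P_{k,\ell}$.
   Context: For $\alpha>0$ and $\ell\ge 2$, a collection $\mathcal{C}$ of labelled $2\ell$-cycles $x_1x_2\cdots x_{2\ell}x_1$ (with distinct vertices) in $G$ is $\alpha$-rich if for every member $x_1\cdots x_{2\ell}x_1\in\mathcal{C}$ and every $1\le i\le 2\ell$ there exist at least $\alpha$ distinct vertices $x_i'$ such that $x_1\cdots x_{i-1}x_i'x_{i+1}\cdots x_{2\ell}x_1\in\mathcal{C}$. The quadrangulated cylinder $P_{k,\ell}$ has vertex set $\{x_{i,j}:1\le i\le k,1\le j\le\ell\}$ and edges $x_{i,j}x_{i+1,j}$ ($1\le i\le k-1$, $1\le j\le\ell$), $x_{i,j+1}x_{i+1,j}$ ($1\le i\le k-1$ odd, $1\le j\le\ell$), $x_{i,j}x_{i+1,j+1}$ ($1\le i\le k-1$ even, $1\le j\le\ell$), with $x_{i,\ell+1}=x_{i,1}$. *)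

From mathcomp Require Import all_boot all_order all_algebra.
Set Implicit Arguments. Unset Strict Implicit. Unset Printing Implicit Defensive.
Import Order.TTheory GRing.Theory Num.Theory.


(* A (finite simple) graph G is given by a vertex type T : finType and a
   symmetric irreflexive adjacency relation e : rel T. *)

(* A labelled 2l-cycle x_1 ... x_{2l} x_1 is a map x : 'I_(2*l) -> T
   (0-indexed) with distinct values and consecutive (cyclically) vertices
   adjacent. *)
Definition is_cycle (T : finType) (e : rel T) (l : nat)
    (x : {ffun 'I_(2 * l) -> T}) : Prop :=
  injective x /\
  forall i j : 'I_(2 * l), val j = (val i).+1 %% (2 * l) -> e (x i) (x j).

Definition replace_at (T : finType) (n : nat) (x : {ffun 'I_n -> T})
    (i : 'I_n) (y : T) : {ffun 'I_n -> T} :=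
  [ffun j => if j == i then y else x j].

Definition rich (R : numDomainType) (T : finType) (l : nat) (alpha : R)
    (C : {set {ffun 'I_(2 * l) -> T}}) : Prop :=
  forall x, x \in C -> forall i : 'I_(2 * l),
    (alpha <= (#|[set y : T | replace_at x i y \in C]|)%:R)%R.

(* Directed "upward" adjacency of the quadrangulated cylinder P_{k,l}, with
   0-indexed rows i (paper row i+1) and columns j (paper column j+1).
   Paper edges: x_{i,j}x_{i+1,j}; for paper i odd (0-indexed even)
   x_{i,j+1}x_{i+1,j}; for paper i even (0-indexed odd) x_{i,j}x_{i+1,j+1};
   column indices taken cyclically mod l. *)
Definition cyl_up (l : nat) (i j i' j' : nat) : bool :=
  (i' == i.+1) &&
  [|| j' == j | if odd i then j' == j.+1 %% l else j == j'.+1 %% l].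

Definition cyl_edge (k l : nat) (a b : 'I_k * 'I_l) : bool :=
  cyl_up l a.1 a.2 b.1 b.2 || cyl_up l b.1 b.2 a.1 a.2.

Definition contains_cyl (T : finType) (e : rel T) (k l : nat) : Prop :=
  exists f : 'I_k * 'I_l -> T,
    injective f /\ forall a b, cyl_edge a b -> e (f a) (f b).

From mathcomp Require Import all_boot all_order all_algebra.
From mathcomp Require Import zify.
Import Order.TTheory GRing.Theory Num.Theory.

Set Implicit Arguments.
Unset Strict Implicit.
Unset Printing Implicit Defensive.

(* A cycle x_0 ... x_{2l-1} of C is read as a zig-zag between two rows of the
   cylinder: positions of parity r mod 2 sit in row r, column p/2, and the
   other positions in a neighbouring row.  We build P_{k,l} row by row while
   maintaining a "layout": an assignment g of vertices to the cells filled so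
   far (rows 0..r completely, row r+1 up to column m), injective and with all
   cylinder edges below row r present, together with a cycle y of C that runs
   along rows r and r+1 (for columns < m) resp. r-1 (for columns >= m).
   - Initially any cycle of C lays out rows 0 and 1.
   - Extending row r+1 by one cell replaces one vertex of y: by richness there
     are at least k*l candidates, while at most (r+1)*l + m < k*l vertices
     are already used, so some candidate is fresh.
   - Once row r+1 is complete, y zig-zags between rows r and r+1, and its
     cycle edges are exactly the cylinder edges between these rows.
   After reaching row k-1 the layout is the required copy of P_{k,l}. *)

(* The row in which position p of the current cycle lies, when the cycle
   runs along row r and row r+1 is filled up to column m. *)
Definition layout_row (r m p : nat) : nat :=
  if p %% 2 == r %% 2 then r else if p %/ 2 < m then r.+1 else r.-1.

Definition filled (l r m i j : nat) : bool :=
  ((i <= r) && (j < l)) || ((i == r.+1) && (j < m)).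

Lemma layout_row_extend r m q :
  layout_row r m.+1 q =
  if q == 2 * m + r.+1 %% 2 then r.+1 else layout_row r m q.
Proof. by rewrite /layout_row; repeat case: ifP; lia. Qed.

Lemma filled_extend l r m i j :
  filled l r m.+1 i j = filled l r m i j || (i == r.+1) && (j == m).
Proof. by rewrite /filled; lia. Qed.

Lemma layout_row_full l r q :
  q < 2 * l -> layout_row r l q = layout_row r.+1 0 q.
Proof. by move=> ql; rewrite /layout_row; repeat case: ifP; lia. Qed.

Lemma filled_full l r i j : filled l r l i j = filled l r.+1 0 i j.
Proof. by rewrite /filled; lia. Qed.

Lemma succ_mod_cases a n : a < n ->
  (a.+1 %% n = a.+1 /\ a.+1 < n) \/ (a.+1 = n /\ a.+1 %% n = 0).
Proof.
move=> an; case: (ltngtP a.+1 n) => h; last by right; rewrite h modnn.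
  by left; rewrite modn_small.
lia.
Qed.

Lemma exists_fresh (T : finType) (S : {set T}) (U : seq T) :
  size U < #|S| -> exists2 v, v \in S & v \notin U.
Proof.
move=> ltUS; apply/exists_inP; rewrite -negb_forall_in; apply/negP => allU.
have /subset_leq_card SU : S \subset U by apply/subsetP => v /(forall_inP allU).
by have := leq_trans SU (card_size U); rewrite leqNgt ltUS.
Qed.

Lemma filled_values (T : eqType) l r m (g : nat -> nat -> T) :
  exists2 U : seq T, size U = r.+1 * l + m &
    forall i j, filled l r m i j -> g i j \in U.
Proof.
exists ([seq g i j | i <- iota 0 r.+1, j <- iota 0 l] ++
        [seq g r.+1 j | j <- iota 0 m]).
  by rewrite size_cat size_allpairs size_map !size_iota.
move=> i j /orP [/andP [ir jl]|/andP [/eqP -> jm]]; rewrite mem_cat.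
  by rewrite (allpairs_f g) // mem_iota; lia.
by rewrite map_f ?orbT // mem_iota; lia.
Qed.

Lemma rich_nat_bound (R : numDomainType) (T : finType) (l n : nat) (alpha : R)
    (C : {set {ffun 'I_(2 * l) -> T}}) :
  rich alpha C -> (n%:R <= alpha)%R ->
  forall x, x \in C -> forall i : 'I_(2 * l),
    n <= #|[set v : T | replace_at x i v \in C]|.
Proof. by move=> hr hn x xC i; rewrite -(ler_nat R) (le_trans hn (hr x xC i)). Qed.

Section Layout.

Variables (T : finType) (e : rel T) (l : nat).
Variable C : {set {ffun 'I_(2 * l) -> T}}.
Hypothesis C_cycles : forall x, x \in C -> is_cycle e x.

Definition layout (r m : nat) (g : nat -> nat -> T) (y : {ffun 'I_(2 * l) -> T})
    : Prop :=
  [/\ y \in C,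
      (forall p : 'I_(2 * l), y p = g (layout_row r m p) (p %/ 2)),
      (forall i j i' j', filled l r m i j -> filled l r m i' j' ->
           g i j = g i' j' -> i = i' /\ j = j') &
      (forall i j j', i < r -> j < l -> j' < l -> cyl_up l i j i.+1 j' ->
           e (g i j) (g i.+1 j'))].

(* Any cycle of C lays out rows 0 and 1: position p goes to cell
   (p mod 2, p/2). *)
Lemma layout_init : 0 < l -> C != set0 -> exists g y, layout 0 l g y.
Proof.
move=> l_gt0 /set0Pn [y yC].
have l2_gt0 : 0 < 2 * l by lia.
pose o0 : 'I_(2 * l) := Ordinal l2_gt0.
pose yn q := y (insubd o0 q).
have ynE q (hq : q < 2 * l) : yn q = y (Ordinal hq).
  by rewrite /yn; congr (y _); apply: val_inj; rewrite /= insubdK.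
have [y_inj _] := C_cycles yC.
exists (fun i j => yn (2 * j + i)), y; split => //.
- move=> p; have p_lt := ltn_ord p.
  have hp : 2 * (p %/ 2) + layout_row 0 l p < 2 * l.
    by rewrite /layout_row; repeat case: ifP; lia.
  rewrite (ynE _ hp); congr (y _); apply: val_inj => /=.
  by rewrite /layout_row; repeat case: ifP; lia.
- move=> i j i' j' f1 f2.
  have h1 : 2 * j + i < 2 * l by move: f1; rewrite /filled; lia.
  have h2 : 2 * j' + i' < 2 * l by move: f2; rewrite /filled; lia.
  rewrite (ynE _ h1) (ynE _ h2) => /y_inj /(congr1 val) /=.
  by move: f1 f2; rewrite /filled; lia.
Qed.

(* Filling one more cell of row r+1 with a fresh vertex, provided by
   richness: at most (r+1)*l + m < k*l vertices are already used. *)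
Lemma layout_extend k r m g y :
  (forall x, x \in C -> forall i : 'I_(2 * l),
      k * l <= #|[set v : T | replace_at x i v \in C]|) ->
  layout r m g y -> m < l -> r.+1 < k ->
  exists g' y', layout r m.+1 g' y'.
Proof.
move=> rich_kl [yC Hy Hinj Hedge] ml rk.
have p_lt : 2 * m + r.+1 %% 2 < 2 * l by lia.
pose p : 'I_(2 * l) := Ordinal p_lt.
have [U sizeU inU] := filled_values l r m g.
have [v vS vU] : exists2 v, v \in [set v | replace_at y p v \in C] & v \notin U.
  apply: exists_fresh; rewrite sizeU; apply: leq_trans (rich_kl y yC p).
  have : r.+2 * l <= k * l by apply: leq_mul.
  by rewrite !mulSn; lia.
have v_new i j : filled l r m i j -> v <> g i j.
  by move=> /inU gU vg; rewrite vg gU in vU.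
exists (fun i j => if (i == r.+1) && (j == m) then v else g i j).
exists (replace_at y p v); split.
- by rewrite inE in vS.
- move=> q; rewrite ffunE layout_row_extend -val_eqE /=.
  case: ifP => [/eqP -> | qp].
    by rewrite eqxx (_ : (2 * m + r.+1 %% 2) %/ 2 == m) //; lia.
  rewrite Hy (_ : (_ && _) = false) //.
  by move: qp; rewrite /layout_row; repeat case: ifP; lia.
- move=> i j i' j'; rewrite !filled_extend.
  case: ifP => c1; case: ifP => c2; rewrite ?c1 ?c2 ?orbF => f1 f2.
  + by move: c1 c2 => /andP [/eqP -> /eqP ->] /andP [/eqP -> /eqP ->].
  + by move=> vg; case: (v_new _ _ f2 vg).
  + by move=> gv; case: (v_new _ _ f1 (esym gv)).
  + exact: Hinj.
- move=> i j j' ir jl jl' cu.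
  have [/negbTE -> /negbTE ->] : i != r.+1 /\ i.+1 != r.+1 by lia.
  exact: Hedge.
Qed.

Hypothesis e_sym : symmetric e.

(* Once row r+1 is complete, the cycle y zig-zags between rows r and r+1;
   its edges are exactly the cylinder edges between these two rows. *)
Lemma layout_next_row r g y : layout r l g y -> layout r.+1 0 g y.
Proof.
move=> [yC Hy Hinj Hedge].
have [_ y_cyc] := C_cycles yC.
have y_edge a b (ha : a < 2 * l) (hb : b < 2 * l) :
    b = a.+1 %% (2 * l) -> e (y (Ordinal ha)) (y (Ordinal hb)).
  by move=> b_succ; apply: y_cyc.
split => //.
- by move=> q; rewrite Hy layout_row_full.
- by move=> i j i' j'; rewrite -!filled_full; apply: Hinj.
move=> i j j' ir jl jl' cu.
have [ilt|i_eq] : i < r \/ i = r by lia.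
  exact: Hedge.
subst i.
have ha : 2 * j + r %% 2 < 2 * l by lia.
have hb : 2 * j' + r.+1 %% 2 < 2 * l by lia.
have -> : g r j = y (Ordinal ha).
  by rewrite Hy; congr (g _ _); rewrite /layout_row /=; repeat case: ifP; lia.
have -> : g r.+1 j' = y (Ordinal hb).
  by rewrite Hy; congr (g _ _); rewrite /layout_row /=; repeat case: ifP; lia.
move: cu; rewrite /cyl_up eqxx /=.
have [r_mod|r_mod] : r %% 2 = 0 \/ r %% 2 = 1 by lia.
- rewrite (_ : odd r = false); last by move: r_mod; rewrite modn2; case: odd.
  move=> /orP [/eqP jj | /eqP jj].
    by apply: y_edge; have := succ_mod_cases ha; lia.
  rewrite e_sym; apply: y_edge.
  by have := succ_mod_cases hb; have := succ_mod_cases jl'; lia.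
- rewrite (_ : odd r = true); last by move: r_mod; rewrite modn2; case: odd.
  move=> /orP [/eqP jj | /eqP jj].
    by rewrite e_sym; apply: y_edge; have := succ_mod_cases hb; lia.
  by apply: y_edge; have := succ_mod_cases ha; have := succ_mod_cases jl; lia.
Qed.

Lemma layout_reach k :
  0 < l -> C != set0 ->
  (forall x, x \in C -> forall i : 'I_(2 * l),
      k * l <= #|[set v : T | replace_at x i v \in C]|) ->
  forall r, 0 < r < k -> exists g y, layout r 0 g y.
Proof.
move=> l_gt0 C_n0 rich_kl; elim=> [//|[|r] IH] /andP [_ rk].
  have [g [y hI]] := layout_init l_gt0 C_n0.
  by exists g, y; apply: layout_next_row.
have fill_row m : m <= l -> exists g y, layout r.+1 m g y.
  elim: m => [_|m IHm ml]; first by apply: IH; lia.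
  have [g [y hI]] := IHm (ltnW ml).
  exact: layout_extend rich_kl hI ml rk.
have [g [y hI]] := fill_row l (leqnn l).
by exists g, y; apply: layout_next_row.
Qed.

Lemma contains_cyl_of_layout k g y :
  0 < k -> layout k.-1 0 g y -> contains_cyl e k l.
Proof.
move=> k_gt0 [_ _ Hinj Hedge].
exists (fun a : 'I_k * 'I_l => g a.1 a.2); split.
  move=> [a1 a2] [b1 b2] /= /Hinj [| |E1 E2]; last by congr pair; apply: val_inj.
    by rewrite /filled; have := ltn_ord a1; have := ltn_ord a2; lia.
  by rewrite /filled; have := ltn_ord b1; have := ltn_ord b2; lia.
have up_edge (a b : 'I_k * 'I_l) : cyl_up l a.1 a.2 b.1 b.2 -> e (g a.1 a.2) (g b.1 b.2).
  move=> h; have E : (b.1 : nat) = a.1.+1 by case/andP: h => /eqP.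
  by rewrite E; apply: Hedge; rewrite -?E //; have := ltn_ord b.1; lia.
move=> a b /orP [/up_edge //|/up_edge]; by rewrite e_sym.
Qed.

End Layout.

Local Open Scope ring_scope.

Theorem proposition3p4 (T : finType) (e : rel T) (R : realFieldType)
    (k l : nat) (alpha : R) (C : {set {ffun 'I_(2 * l) -> T}}) :
  symmetric e -> irreflexive e ->
  (2 <= k)%N -> (2 <= l)%N -> 0 < alpha ->
  (forall x, x \in C -> is_cycle e x) ->
  C != set0 ->
  rich alpha C ->
  (k * l)%:R <= alpha ->
  contains_cyl e k l.
Proof.
move=> e_sym _ k_ge2 l_ge2 _ C_cycles C_n0 C_rich kl_le_alpha.
have rich_kl := rich_nat_bound C_rich kl_le_alpha.
have row_k : (0 < k.-1 < k)%N by apply/andP; split; lia.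
have [g [y hI]] := layout_reach C_cycles e_sym (ltnW l_ge2) C_n0 rich_kl row_k.
by apply: (contains_cyl_of_layout e_sym _ hI); lia.
Qed.
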